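(* Let $X$ be a real vector space and let $K\subseteq X$ be a nontrivial convex cone having a convex and relatively solid base $B$. Then $K^{ss}:=\{l\in X':\ \inf_{b\in B}l(b)>0\}$ is nonempty.
   Context: $X'$ is the algebraic dual of $X$. $K$ nontrivial means $K\ne\{0\}$, $K\ne X$. A base of $K$ is a set $B$ with $0\notin B$ such that each $k\in K\setminus\{0\}$ has a unique representation $k=tb$ with $t>0$, $b\in B$. $B$ is relatively solid if $icr(B)\neq\emptyset$, where $icr(B):=\{x\in B:\ \forall x'\in span(B-B)\ \exists \lambda'>0 \text{ with } x+\lambda x'\in B\ \forall\lambda\in[0,\lambda']\}$. *)

From HB Require Import structures.
From mathcomp Require Import all_boot all_order all_algebra.
From mathcomp Require Import all_classical all_reals.
From mathcomp Require Import ereal.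
Set Implicit Arguments. Unset Strict Implicit. Unset Printing Implicit Defensive.
Import Order.TTheory GRing.Theory Num.Theory.
Local Open Scope classical_set_scope.
Local Open Scope ring_scope.

Section Defs.
Variables (R : realType) (X : lmodType R).

Definition convex_set (A : set X) : Prop :=
  forall x y t, A x -> A y -> 0 <= t -> t <= 1 -> A (t *: x + (1 - t) *: y).

Definition is_cone (K : set X) : Prop :=
  K 0 /\ forall t x, 0 <= t -> K x -> K (t *: x).

Definition convex_cone (K : set X) : Prop := is_cone K /\ convex_set K.

Definition nontrivial (K : set X) : Prop := K <> [set 0] /\ K <> setT.

Definition is_base (K B : set X) : Prop :=
  B `<=` K /\ ~ B 0 /\
  forall k, K k -> k <> 0 ->
    exists t b, [/\ 0 < t, B b, k = t *: b &
      forall t' b', 0 < t' -> B b' -> k = t' *: b' -> t' = t /\ b' = b].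

Definition set_diff (B : set X) : set X := [set x - y | x in B & y in B].

Definition lspan (A : set X) : set X :=
  [set v | exists n (c : 'I_n -> R) (w : 'I_n -> X),
     (forall i, A (w i)) /\ v = \sum_(i < n) c i *: w i].

Definition icr (B : set X) : set X :=
  [set x | B x /\ forall x', lspan (set_diff B) x' ->
     exists l', 0 < l' /\ forall l, 0 <= l -> l <= l' -> B (x + l *: x')].

Definition relatively_solid (B : set X) : Prop := icr B !=set0.

(* strictly positive dual cone K^ss w.r.t. the base B, inside the algebraic dual *)
Definition Kss (B : set X) : set {linear X -> R^o} :=
  [set l | (0 < ereal_inf [set (l b)%:E | b in B])%E].

End Defs.

From HB Require Import structures.
From mathcomp Require Import all_boot all_order all_algebra.
From mathcomp Require Import all_classical all_reals ereal.
Set Implicit Arguments. Unset Strict Implicit. Unset Printing Implicit Defensive.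
Import Order.TTheory GRing.Theory Num.Theory.
Local Open Scope classical_set_scope.
Local Open Scope ring_scope.

(* Take b0 in icr B.  Then b0 is not in L := span (B - B): otherwise -b0 is
   an admissible direction at b0, so (1 - l) b0 lies in B for some small
   l > 0, and b0 would have two representations t b with b in B.  A Zorn
   complement of L along b0 yields a linear functional vanishing on L with
   value 1 at b0; it is identically 1 on B, since B lies in b0 + L. *)

Section LinearFunctionals.
Variables (R : realType) (X : lmodType R).

Definition subspace (S : set X) : Prop :=
  S 0 /\ forall a x y, S x -> S y -> S (a *: x + y).

Lemma subspaceZ (S : set X) a x : subspace S -> S x -> S (a *: x).
Proof. by move=> [S0 SP] Sx; rewrite -[_ *: x]addr0; apply: SP. Qed.

Lemma subspaceB (S : set X) x y : subspace S -> S x -> S y -> S (x - y).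
Proof.
by move=> [_ SP] Sx Sy; rewrite addrC -scaleN1r; apply: SP.
Qed.

Lemma sub_lspan (A : set X) : A `<=` lspan A.
Proof.
move=> x Ax; exists 1%N, (fun=> 1), (fun=> x); split => //.
by rewrite big_ord1 scale1r.
Qed.

Lemma lspan_subspace (A : set X) : subspace (lspan A).
Proof.
split; first by exists 0%N, (fun=> 0), (fun=> 0); split => [[]|]; rewrite ?big_ord0.
move=> a x y [n [c [w [Aw ->]]]] [m [d [v [Av ->]]]].
exists (n + m)%N.
exists (fun i => match fintype.split i with inl j => a * c j | inr k => d k end).
exists (fun i => match fintype.split i with inl j => w j | inr k => v k end).
split; first by move=> i; case: fintype.split.
rewrite big_split_ord /= scaler_sumr; congr (_ + _); apply: eq_bigr => i _.
  by rewrite (unsplitK (inl i)) scalerA.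
by rewrite (unsplitK (inr i)).
Qed.

Section Complement.
Variables (L : set X) (b0 : X).
Hypotheses (subL : subspace L) (Lb0 : ~ L b0).

(* Zorn_bigcup must also accept the empty chain, hence chains of sets A
   with A `|` L (rather than A itself) a subspace avoiding b0. *)
Lemma maximal_subspace_avoiding : exists M : set X,
  [/\ subspace M, L `<=` M, ~ M b0 &
      forall N, subspace N -> M `<=` N -> ~ N b0 -> N `<=` M].
Proof.
pose P (A : set X) := subspace (A `|` L) /\ ~ (A `|` L) b0.
have [A [[subAL ALb0] maxA]] : exists A, P A /\ forall B, A `<` B -> ~ P B.
  apply: Zorn_bigcup => F FP Ftot.
  have lift A z : F A -> (A `|` L) z -> ((\bigcup_(Y in F) Y) `|` L) z.
    by move=> FA [Az|Lz]; [left; exists A|right].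
  split; first split.
  - by right; case: subL.
  - move=> a x y [[A1 FA1 A1x]|Lx] [[A2 FA2 A2y]|Ly].
    + have [A12|A21] := Ftot _ _ FA1 FA2.
        by apply: (lift A2) => //; apply: (FP _ FA2).1.2; left => //; apply: A12.
      by apply: (lift A1) => //; apply: (FP _ FA1).1.2; left => //; apply: A21.
    + by apply: (lift A1) => //; apply: (FP _ FA1).1.2; [left|right].
    + by apply: (lift A2) => //; apply: (FP _ FA2).1.2; [right|left].
    + by right; apply: subL.2.
  - by move=> [[A1 FA1 A1b]|Lb]; [apply: (FP _ FA1).2; left|].
exists (A `|` L); split=> //.
move=> N subN ALN Nb0 x Nx; apply: contrapT => ALx.
have LN : N `|` L = N.
  by apply/seteqP; split=> [z [//|Lz]|z Nz]; [apply: ALN; right|left].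
apply: (maxA N); last by rewrite /P LN.
by split=> [z Az|NA]; [apply: ALN; left|apply: ALx; left; apply: NA].
Qed.

Variable M : set X.
Hypotheses (subM : subspace M) (Mb0 : ~ M b0).

Lemma maximal_avoiding_complement :
  (forall N, subspace N -> M `<=` N -> ~ N b0 -> N `<=` M) ->
  forall x, exists t, M (x - t *: b0).
Proof.
move=> maxM x; apply: contrapT => /forallNP Mxb0.
pose N := [set z | exists m t, M m /\ z = m + t *: x].
have MN : M `<=` N by move=> z Mz; exists z, 0; rewrite scale0r addr0.
have subN : subspace N.
  split; first exact/MN/subM.1.
  move=> a _ _ [m1 [t1 [Mm1 ->]]] [m2 [t2 [Mm2 ->]]].
  exists (a *: m1 + m2), (a * t1 + t2); split; first exact: subM.2.
  by rewrite scalerDr scalerDl scalerA addrACA.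
have Nb0 : ~ N b0.
  move=> [m [t [Mm eb0]]]; have [t0|tn0] := eqVneq t 0.
    by apply: Mb0; rewrite eb0 t0 scale0r addr0.
  apply: (Mxb0 t^-1).
  have -> : x - t^-1 *: b0 = (- t^-1) *: m.
    rewrite eb0 scalerDr scalerA mulVf // scale1r opprD.
    by rewrite addrCA subrr addr0 scaleNr.
  exact: subspaceZ.
apply: (Mxb0 0); rewrite scale0r subr0; apply: (maxM _ subN MN Nb0).
by exists 0, 1; rewrite add0r scale1r; split => //; case: subM.
Qed.

Lemma complement_coord_unique x s t :
  M (x - s *: b0) -> M (x - t *: b0) -> s = t.
Proof.
move=> Ms Mt; apply: contrapT => /eqP st; apply: Mb0.
have dM : M ((x - s *: b0) - (x - t *: b0)) by apply: subspaceB.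
rewrite opprB addrC addrA subrK -scalerBl in dM.
rewrite -[b0]scale1r -(@mulVf _ (t - s)) ?subr_eq0 1?eq_sym // -scalerA.
exact: subspaceZ.
Qed.

End Complement.

Lemma exists_linear_vanishing_on (L : set X) (b0 : X) :
  subspace L -> ~ L b0 ->
  exists f : {linear X -> R^o}, f b0 = 1 /\ forall x, L x -> f x = 0.
Proof.
move=> subL Lb0.
have [M [subM LM Mb0 maxM]] := maximal_subspace_avoiding subL Lb0.
have compl := maximal_avoiding_complement subM Mb0 maxM.
pose g x : R := xget 0 [set t | M (x - t *: b0)].
have gP x : M (x - g x *: b0) := xgetPex 0 (compl x).
have coord := complement_coord_unique subM Mb0.
have g_lin : linear (g : X -> R^o).
  move=> a x y; apply/esym/(coord (a *: x + y)); last exact: gP.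
  have -> : a *: x + y - (a * g x + g y) *: b0
      = a *: (x - g x *: b0) + (y - g y *: b0).
    by rewrite scalerBr scalerA scalerDl opprD addrACA.
  exact: subM.2.
exists (HB.pack_for {linear X -> R^o} g (GRing.isLinear.Build R X R^o *:%R g g_lin)).
split=> [|x Lx] /=; apply/esym/coord; rewrite ?gP //.
- by rewrite scale1r subrr; case: subM.
- by rewrite scale0r subr0; apply: LM.
Qed.

End LinearFunctionals.

Section Bases.
Variables (R : realType) (X : lmodType R) (K B : set X).
Hypothesis baseB : is_base K B.

Lemma base_scale_eq1 b t : B b -> 0 < t -> B (t *: b) -> t = 1.
Proof.
case: baseB => BK [B0 uniq] Bb t0 Btb.
have b0 : b <> 0 by move=> eb; apply: B0; rewrite -eb.
have [s [b' [_ _ _ rep]]] := uniq b (BK _ Bb) b0.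
have [s1 _] := rep 1 b ltr01 Bb (esym (scale1r b)).
have tV0 : 0 < t^-1 by rewrite invr_gt0.
have Vtb : b = t^-1 *: (t *: b) by rewrite scalerA mulVf ?scale1r ?gt_eqF.
have [tV1 _] := rep _ _ tV0 Btb Vtb.
by rewrite -[t]invrK tV1 -s1 invr1.
Qed.

Lemma icr_notin_lspan b0 : icr B b0 -> ~ lspan (set_diff B) b0.
Proof.
move=> [Bb0 dirs] Lb0.
have [l' [l'0 segB]] := dirs _ (subspaceZ (-1) (lspan_subspace _) Lb0).
pose l := Num.min l' (1 / 2 : R).
have l0 : 0 < l by rewrite lt_min l'0 /= divr_gt0.
have l_lt1 : l < 1.
  rewrite (@le_lt_trans _ _ (1 / 2)) ?ge_min ?lexx ?orbT //.
  by rewrite ltr_pdivrMr // mul1r ltr1n.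
have := segB l (ltW l0) (ltac:(by rewrite ge_min lexx)).
rewrite scaleN1r scalerN -{1}[b0]scale1r -scalerBl.
move/(base_scale_eq1 Bb0); rewrite subr_gt0 => /(_ l_lt1)/eqP.
by rewrite subr_eq addrC -subr_eq subrr eq_sym (gt_eqF l0).
Qed.

End Bases.

Theorem lemma4p15 (R : realType) (X : lmodType R) (K B : set X) :
  convex_cone K -> nontrivial K ->
  is_base K B -> convex_set B -> relatively_solid B ->
  Kss B !=set0.
Proof.
move=> _ _ baseB _ [b0 icrb0].
have [f [fb0 f_span]] := exists_linear_vanishing_on (lspan_subspace (set_diff B))
  (icr_notin_lspan baseB icrb0).
exists f; rewrite /Kss /=.
apply: (@lt_le_trans _ _ 1%:E); first by rewrite lte_fin ltr01.
apply/ereal_infP => _ [b Bb <-]; rewrite lee_fin.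
have fbb0 : f (b - b0) = 0.
  by apply/f_span/sub_lspan; exists b => //; exists b0 => //; case: icrb0.
by rewrite -fb0 -subr_ge0 -linearB /= fbb0.
Qed.
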